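(* Assume the vertex degrees of $G$ are uniformly bounded, let $\theta\in(0,1)$, and let $\rho=\lim_nR_n^{1/n}$. For every $\varepsilon>0$ there is $N$ such that for all $n\ge N$ and all $f\in\mathrm{Lip}_\theta$: $$\|\mathcal T^nf-\mathcal T^n\Pi_nf\|_\infty\le(\rho+\varepsilon)^n\theta^n\,\mathrm L_1(f),\qquad \|\mathcal T^nf-\mathcal T^n\Pi_nf\|_\theta\le(\rho+\varepsilon)^n\theta^n\,\mathrm L_1(f).$$
   Context: $G$ is a connected, locally finite graph (no loops, no multiple edges, every vertex of degree $\ge2$). $E$ oriented edges with $\iota,\tau$, opposite $\bar e$; turn $e\rightsquigarrow e'$ iff $\tau(e)=\iota(e')$, $e'\ne\bar e$. $P$ = infinite paths $(e_1,e_2,\dots)$ with $e_i\rightsquigarrow e_{i+1}$; $(\mathcal Tf)(e_1,\dots)=\sum_{e_0\rightsquigarrow e_1}f(e_0,e_1,\dots)$. $R_n=\sup_{e}\#\{(e_{-n},\dots,e_0): e_i\rightsquigarrow e_{i+1},\ e_0=e\}$. A postal code of length $m$ is a finite path $c=(c_1,\dots,c_m)$ with $c_i\rightsquigarrow c_{i+1}$; its district $P_c$ is the set of $p\in P$ beginning with $c$. For each $m$ and each postal code $c$ of length $m$ a point $p_c\in P_c$ is fixed, and $\Pi_m f$ is the function with $(\Pi_mf)(p)=f(p_c)$, $c$ the length-$m$ prefix of $p$. $d_\theta(p,p')=\theta^{k-1}$, $k=\min\{i:e_i\ne e'_i\}$; $\mathrm{Lip}_\theta$ = bounded $f$ uniformly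 $d_\theta$-Lipschitz on islands $\{p:\iota(e_1)=v\}$; $\mathrm L_1(f)$ = optimal Lipschitz constant over pairs with the same first edge; $\|f\|_\theta=\mathrm L_1(f)+\|f\|_\infty$. *)

From HB Require Import structures.
From mathcomp Require Import all_boot all_order all_algebra.
From mathcomp Require Import all_classical all_reals all_analysis.
Set Implicit Arguments. Unset Strict Implicit. Unset Printing Implicit Defensive.
Import Order.TTheory GRing.Theory Num.Theory.
Local Open Scope classical_set_scope.
Local Open Scope ring_scope.

Section Defs.
Variables (R : realType) (V : eqType) (nbrs : V -> seq V).

Definition isEdge (e : V * V) : bool := e.2 \in nbrs e.1.
Definition iota_ (e : V * V) : V := e.1.
Definition tau_ (e : V * V) : V := e.2.
Definition rev_edge (e : V * V) : V * V := (e.2, e.1).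

Definition turn (e e' : V * V) : bool :=
  [&& isEdge e, isEdge e', tau_ e == iota_ e' & e' != rev_edge e].

(* infinite paths (e_1, e_2, ...) are indexed from 0: p 0 = e_1 *)
Definition seqE := nat -> V * V.
Definition Paths : set seqE := [set p | forall i, turn (p i) (p i.+1)].

Definition postal (c : seq (V * V)) : bool :=
  if c is c1 :: cs then isEdge c1 && path turn c1 cs else true.

Definition code_prefix (m : nat) (p : seqE) : seq (V * V) := mkseq p m.

Definition scons (e : V * V) (p : seqE) : seqE :=
  fun i => if i is k.+1 then p k else e.

(* transfer operator: (T f)(e_1,...) = sum_{e_0 ~> e_1} f(e_0,e_1,...);
   the edges e_0 with e_0 ~> e_1 are the (u, iota e_1), u neighbour of
   iota e_1, u <> tau e_1. *)
Definition transfer (f : seqE -> R) : seqE -> R :=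
  fun p => \sum_(u <- nbrs (iota_ (p 0)) | u != tau_ (p 0))
             f (scons (u, iota_ (p 0)) p).

(* Pi_m f, given the chosen representatives pc c of the districts P_c *)
Definition Pi (pc : seq (V * V) -> seqE) (m : nat) (f : seqE -> R) : seqE -> R :=
  fun p => f (pc (code_prefix m p)).

(* number of (e_{-n},...,e_0) with e_i ~> e_{i+1} and e_0 = e *)
Fixpoint nback (n : nat) (e : V * V) : nat :=
  if n is k.+1 then
    \sum_(u <- nbrs (iota_ e) | u != tau_ e) nback k (u, iota_ e)
  else 1.

Definition Rn (n : nat) : R :=
  sup [set (nback n e)%:R | e in [set e | isEdge e]].

(* d_theta(p,p') = theta^(k-1), k the first (1-based) index where they differ *)
Definition dtheta (theta : R) (p q : seqE) : R :=
  match pselect (exists k, p k != q k) with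
  | left H => theta ^+ ex_minn H
  | right _ => 0
  end.

Definition Lip (theta : R) (f : seqE -> R) : Prop :=
  (exists M : R, forall p, Paths p -> `|f p| <= M) /\
  (exists L : R, forall p q, Paths p -> Paths q -> iota_ (p 0) = iota_ (q 0) ->
     `|f p - f q| <= L * dtheta theta p q).

(* sup norm (over P) and optimal Lipschitz constant over pairs with the same
   first edge, as extended reals (+oo if no finite bound exists) *)
Definition normInf (f : seqE -> R) : \bar R :=
  ereal_inf [set M%:E | M in [set M : R | 0 <= M /\
     forall p, Paths p -> `|f p| <= M]].

Definition L1 (theta : R) (f : seqE -> R) : \bar R :=
  ereal_inf [set L%:E | L in [set L : R | 0 <= L /\
     forall p q, Paths p -> Paths q -> p 0 = q 0 ->
       `|f p - f q| <= L * dtheta theta p q]].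

Definition normTheta (theta : R) (f : seqE -> R) : \bar R :=
  (L1 theta f + normInf f)%E.

End Defs.

(* For f Lipschitz on the path space with constant L, write g_n for the
   difference T^n f - T^n (Pi_n f).  Unfolding T^n, both terms are sums
   over the same nback(n, e_1) <= R_n backward extensions of a path p;
   the extended paths agree on their first n edges, so
     - each summand of g_n(p) compares f at two paths sharing n edges,
       hence is at most L theta^n, giving |g_n| <= R_n theta^n L;
     - for p, q with the same first edge, T^n (Pi_n f) p = T^n (Pi_n f) q,
       while the summands of T^n f p - T^n f q compare paths whose distance
       is theta^n d(p,q), giving the Lipschitz bound R_n theta^n L d(p,q).
   Taking the infimum over admissible L bounds the sup norm and L_1(g_n)
   by R_n theta^n L_1(f); finally, since R_n^(1/n) -> rho, eventually
   2 R_n <= (rho + eps)^n, which absorbs both the constant and the two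
   terms of the theta-norm. *)
From HB Require Import structures.
From mathcomp Require Import all_boot all_order all_algebra.
From mathcomp Require Import all_classical all_reals all_analysis.
From mathcomp Require Import lra ring.
Set Implicit Arguments. Unset Strict Implicit. Unset Printing Implicit Defensive.
Import Order.TTheory GRing.Theory Num.Theory numFieldNormedType.Exports.
Local Open Scope classical_set_scope.
Local Open Scope ring_scope.

Section PathCombinatorics.
Variables (V : eqType) (nbrs : V -> seq V).
Hypothesis Hsym : forall u v, (u \in nbrs v) = (v \in nbrs u).

Lemma scons_path (p : seqE V) u :
  Paths nbrs p -> u \in nbrs (iota_ (p 0%N)) -> u != tau_ (p 0%N) ->
  Paths nbrs (scons (u, iota_ (p 0%N)) p).
Proof.
move=> Hp Hu Hut [|i] /=; last exact: Hp i.
have /andP[E0 _] := Hp 0%N; move: E0 Hu Hut.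
rewrite /turn /isEdge /iota_ /tau_ /rev_edge; case: (p 0%N) => x y /= E0 Hu Hut.
by rewrite -Hsym Hu E0 eqxx /= xpair_eqE negb_and eq_sym Hut orbT.
Qed.

Lemma postal_prefix (p : seqE V) n :
  Paths nbrs p -> (0 < n)%N -> postal nbrs (code_prefix n p).
Proof.
move=> Hp; case: n => // n _.
have turns k m : path (turn nbrs) (p k) (map p (iota k.+1 m)).
  by elim: m k => // m IH k /=; rewrite Hp IH.
by rewrite /code_prefix /mkseq /=; have /andP[-> _] := Hp 0%N; exact: turns.
Qed.

Lemma code_prefix_agree (p q : seqE V) n :
  (forall i, (i < n)%N -> p i = q i) -> code_prefix n p = code_prefix n q.
Proof.
move=> Hag; apply/eq_in_map => i.
by rewrite mem_iota add0n => /andP[_ /Hag].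
Qed.

End PathCombinatorics.

Section IteratedTransfer.
Variables (R : realType) (V : eqType) (nbrs : V -> seq V).
Hypothesis Hsym : forall u v, (u \in nbrs v) = (v \in nbrs u).

(* Fundamental estimate: T^n h1 p - T^n h2 q is a sum of nback(n, e_1)
   differences h1 p' - h2 q', where p', q' are paths extending p, q backwards
   by the same n edges. *)
Lemma iter_transfer_diff n (h1 h2 : seqE V -> R) (B : R) (p q : seqE V) :
  Paths nbrs p -> Paths nbrs q -> p 0%N = q 0%N ->
  (forall p' q', Paths nbrs p' -> Paths nbrs q' ->
     (forall i, (i < n)%N -> p' i = q' i) ->
     (forall i, p' (n + i)%N = p i /\ q' (n + i)%N = q i) ->
     `|h1 p' - h2 q'| <= B) ->
  `|iter n (transfer nbrs) h1 p - iter n (transfer nbrs) h2 q|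
    <= (nback nbrs n (p 0%N))%:R * B.
Proof.
elim: n h1 h2 B p q => [|n IH] h1 h2 B p q Hp Hq Hpq H.
  by rewrite /= mul1r; apply: H => // i; rewrite add0n.
rewrite !iterS /transfer -Hpq -sumrB /= natr_sum mulr_suml.
apply: le_trans (ler_norm_sum _ _ _) _.
rewrite big_seq_cond [X in _ <= X]big_seq_cond; apply: ler_sum => u /andP[Hu Hut].
apply: IH => //; first exact: scons_path.
  by rewrite Hpq; apply: scons_path; rewrite -?Hpq.
move=> p' q' Hp' Hq' Hag Hsh; apply: H => // [i|i].
  rewrite ltnS leq_eqVlt => /orP[/eqP ->|]; last exact: Hag.
  by have [] := Hsh 0%N; rewrite addn0 /= => -> ->.
by have := Hsh i.+1; rewrite addnS addSn.
Qed.

End IteratedTransfer.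

Section PathMetric.
Variables (R : realType) (V : eqType) (theta : R).
Hypothesis Htheta : 0 <= theta <= 1.

Lemma dtheta_ge0 (p q : seqE V) : 0 <= dtheta theta p q.
Proof.
by case/andP: Htheta => t0 _; rewrite /dtheta; case: pselect => // H; exact: exprn_ge0.
Qed.

Lemma dtheta_agree (p q : seqE V) n :
  (forall i, (i < n)%N -> p i = q i) -> dtheta theta p q <= theta ^+ n.
Proof.
case/andP: Htheta => t0 t1 Hag; rewrite /dtheta; case: pselect => [H|_].
  case: ex_minnP => m Hm _; apply: ler_wiXn2l => //.
  by rewrite leqNgt; apply/negP => /Hag mn; rewrite mn eqxx in Hm.
exact: exprn_ge0.
Qed.

Lemma dtheta_shift (p q p' q' : seqE V) n :
  (forall i, (i < n)%N -> p' i = q' i) ->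
  (forall i, p' (n + i)%N = p i /\ q' (n + i)%N = q i) ->
  dtheta theta p' q' <= theta ^+ n * dtheta theta p q.
Proof.
case/andP: Htheta => t0 t1 Hag Hsh; rewrite {1}/dtheta; case: pselect => [H|_];
  last by rewrite mulr_ge0 ?exprn_ge0 ?dtheta_ge0.
case: ex_minnP => m Hm _.
have nm : (n <= m)%N.
  by rewrite leqNgt; apply/negP => /Hag mn; rewrite mn eqxx in Hm.
have Hk : p (m - n)%N != q (m - n)%N.
  by have [<- <-] := Hsh (m - n)%N; rewrite subnKC.
rewrite /dtheta; case: pselect => [H2|H2]; last by case: H2; exists (m - n)%N.
case: ex_minnP => k _ Hmin; rewrite -exprD; apply: ler_wiXn2l => //.
by rewrite -(subnKC nm) leq_add2l; exact: Hmin.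
Qed.

End PathMetric.

Section BackwardCount.
Variables (V : eqType) (nbrs : V -> seq V) (D : nat).
Hypothesis HD : forall v, (size (nbrs v) <= D)%N.

Lemma sum_le_size (T : Type) (s : seq T) (P : pred T) (F : T -> nat) K :
  (forall u, (F u <= K)%N) -> (\sum_(u <- s | P u) F u <= size s * K)%N.
Proof.
move=> HF; elim: s => [|x s IH]; first by rewrite big_nil.
rewrite big_cons /= mulSn; case: (P x); first by rewrite leq_add.
exact: leq_trans IH (leq_addl _ _).
Qed.

Lemma nback_bound n e : (nback nbrs n e <= D ^ n)%N.
Proof.
elim: n e => [|n IH] e //=; rewrite expnS.
apply: leq_trans (sum_le_size _ _ (fun u => IH (u, iota_ e))) _.
by rewrite leq_mul2r HD orbT.
Qed.

(* Hence R_n is a genuine supremum, dominating every count nback(n, e). *)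
Lemma nback_le_Rn (R : realType) n e :
  isEdge nbrs e -> (nback nbrs n e)%:R <= Rn R nbrs n.
Proof.
move=> He; apply: sup_upper_bound; last by exists e.
split; first by exists (nback nbrs n e)%:R; exists e.
by exists (D ^ n)%:R => _ [e' _ <-]; rewrite ler_nat; exact: nback_bound.
Qed.

Lemma Rn_ge0 (R : realType) n : 0 <= Rn R nbrs n.
Proof.
have [[e He]|Hno] := pselect (exists e, isEdge nbrs e).
  exact: le_trans (ler0n _ _) (nback_le_Rn R n He).
rewrite /Rn (_ : [set _ | e in _] = set0) ?sup0 //.
by apply/seteqP; split => x // [e He _]; case: Hno; exists e.
Qed.

End BackwardCount.

Section ProjectionError.
Variables (R : realType) (V : eqType) (nbrs : V -> seq V) (D : nat).
Variables (pc : seq (V * V) -> seqE V) (theta : R).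
Hypothesis Hsym : forall u v, (u \in nbrs v) = (v \in nbrs u).
Hypothesis HD : forall v, (size (nbrs v) <= D)%N.
Hypothesis Hpc : forall c, (0 < size c)%N -> postal nbrs c ->
  Paths nbrs (pc c) /\ code_prefix (size c) (pc c) = c.
Hypothesis Htheta : 0 <= theta <= 1.

Definition lip_bound (f : seqE V -> R) (L : R) : Prop :=
  0 <= L /\ forall p q, Paths nbrs p -> Paths nbrs q -> p 0%N = q 0%N ->
    `|f p - f q| <= L * dtheta theta p q.

Definition approx_error (n : nat) (f : seqE V -> R) : seqE V -> R :=
  fun p => iter n (transfer nbrs) f p - iter n (transfer nbrs) (Pi pc n f) p.

Lemma Pi_agree n (f : seqE V -> R) (p q : seqE V) :
  (forall i, (i < n)%N -> p i = q i) -> Pi pc n f p = Pi pc n f q.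
Proof. by move=> Hag; rewrite /Pi (code_prefix_agree Hag). Qed.

Lemma representative_agree (p : seqE V) n : Paths nbrs p -> (0 < n)%N ->
  Paths nbrs (pc (code_prefix n p)) /\
  forall i, (i < n)%N -> p i = pc (code_prefix n p) i.
Proof.
move=> Hp n_gt0; have scode : size (code_prefix n p) = n by rewrite size_mkseq.
have [Hpath Hcode] := Hpc (etrans (congr1 _ scode) n_gt0) (postal_prefix Hp n_gt0).
split=> // i Hi; rewrite scode in Hcode.
by have := congr1 (fun s => nth (p 0%N) s i) Hcode; rewrite !nth_mkseq.
Qed.

Lemma Pi_close (f : seqE V -> R) L (p : seqE V) n : lip_bound f L -> Paths nbrs p -> (0 < n)%N ->
  `|f p - Pi pc n f p| <= theta ^+ n * L.
Proof.
move=> [L0 HL] Hp n_gt0; have [Hpath Hag] := representative_agree Hp n_gt0.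
apply: le_trans (HL _ _ Hp Hpath (Hag 0%N n_gt0)) _.
by rewrite (mulrC L); apply: ler_wpM2r => //; exact: dtheta_agree.
Qed.

Lemma nback_le_Rn_path n (p : seqE V) :
  Paths nbrs p -> (nback nbrs n (p 0%N))%:R <= Rn R nbrs n.
Proof. by move=> Hp; apply: (nback_le_Rn HD); have /andP[] := Hp 0%N. Qed.

Section FixedLipschitzConstant.
Variables (f : seqE V -> R) (L : R) (n : nat).
Hypothesis HL : lip_bound f L.
Hypothesis n_gt0 : (0 < n)%N.

Lemma approx_error_sup (p : seqE V) : Paths nbrs p ->
  `|approx_error n f p| <= Rn R nbrs n * theta ^+ n * L.
Proof.
move=> Hp; have L0 : 0 <= L by case: HL.
apply: le_trans (iter_transfer_diff Hsym (B := theta ^+ n * L) Hp Hp erefl _) _.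
  move=> p' q' Hp' _ Hag _; rewrite -(Pi_agree f Hag); exact: Pi_close.
rewrite -mulrA; apply: ler_wpM2r; last exact: nback_le_Rn_path.
by case/andP: Htheta => t0 _; rewrite mulr_ge0 ?exprn_ge0.
Qed.

Lemma approx_error_lip (p q : seqE V) :
  Paths nbrs p -> Paths nbrs q -> p 0%N = q 0%N ->
  `|approx_error n f p - approx_error n f q|
    <= Rn R nbrs n * theta ^+ n * L * dtheta theta p q.
Proof.
move=> Hp Hq Hpq; have [L0 HLf] := HL.
set B := theta ^+ n * L * dtheta theta p q.
have B0 : 0 <= B.
  by case/andP: Htheta => t0 _; rewrite !mulr_ge0 ?exprn_ge0 ?dtheta_ge0.
(* T^n f is Lipschitz with the contracted constant ... *)
have Hf : `|iter n (transfer nbrs) f p - iter n (transfer nbrs) f q|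
    <= (nback nbrs n (p 0%N))%:R * B.
  apply: iter_transfer_diff => // p' q' Hp' Hq' Hag Hsh.
  apply: le_trans (HLf _ _ Hp' Hq' (Hag 0%N n_gt0)) _.
  rewrite /B mulrAC (mulrC L); apply: ler_wpM2r => //; exact: dtheta_shift.
(* ... while T^n (Pi_n f) only depends on the first edge. *)
have HPi : `|iter n (transfer nbrs) (Pi pc n f) p
             - iter n (transfer nbrs) (Pi pc n f) q| <= (nback nbrs n (p 0%N))%:R * 0.
  apply: iter_transfer_diff => // p' q' _ _ Hag _.
  by rewrite (Pi_agree f Hag) subrr normr0.
rewrite /approx_error (_ : forall a1 b1 a2 b2 : R,
  a1 - b1 - (a2 - b2) = (a1 - a2) - (b1 - b2)); last by move=> *; ring.
apply: le_trans (ler_normB _ _) _; apply: le_trans (lerD Hf HPi) _.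
rewrite mulr0 addr0 (_ : _ * dtheta _ _ _ = Rn R nbrs n * B); last by rewrite /B !mulrA.
by apply: ler_wpM2r; last exact: nback_le_Rn_path.
Qed.

Lemma approx_error_norms :
  (normInf nbrs (approx_error n f) <= (Rn R nbrs n * theta ^+ n * L)%:E)%E /\
  (L1 nbrs theta (approx_error n f) <= (Rn R nbrs n * theta ^+ n * L)%:E)%E.
Proof.
have c0 : 0 <= Rn R nbrs n * theta ^+ n * L.
  case: HL => L0 _; case/andP: Htheta => t0 _.
  by rewrite !mulr_ge0 ?exprn_ge0 ?(Rn_ge0 HD).
split; apply: ereal_inf_lbound; exists (Rn R nbrs n * theta ^+ n * L) => //.
  by split=> // p; exact: approx_error_sup.
by split=> // p q; exact: approx_error_lip.
Qed.

End FixedLipschitzConstant.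
End ProjectionError.

Section GrowthRate.
Variable R : realType.

Lemma root_test_bound (r : nat -> R) (rho a : R) :
  (fun n : nat => powR (r n) (n%:R)^-1) @ \oo --> rho -> rho < a ->
  0 < a /\ exists N, forall n, (N <= n)%N -> r n <= a ^+ n.
Proof.
move=> Hr rho_a; have [N _ HN] := cvgr_lt _ Hr a rho_a.
have a_gt0 : 0 < a by apply: le_lt_trans (HN N (leqnn _)); exact: powR_ge0.
split=> //; exists (maxn 1 N) => n; rewrite geq_max => /andP[n_gt0 nN].
have [r_ge0|r_lt0] := lerP 0 (r n); last first.
  by apply: le_trans (ltW r_lt0) _; rewrite exprn_ge0 // ltW.
have -> : r n = (powR (r n) (n%:R)^-1) ^+ n.
  rewrite -powR_mulrn ?powR_ge0 // -powRrM mulVf ?powRr1 //.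
  by rewrite pnatr_eq0 -lt0n.
by apply: lerXn2r; rewrite ?qualifE /= ?powR_ge0 ?ltW // (HN n nN).
Qed.

Lemma geometric_domination (a b : R) : 0 < a -> a < b ->
  exists N, forall n, (N <= n)%N -> 2 * a ^+ n <= b ^+ n.
Proof.
move=> a_gt0 ab; have b_gt0 : 0 < b by apply: lt_trans ab.
have ratio_lt1 : `|a / b| < 1.
  by rewrite ger0_norm ?divr_ge0 ?ltW // ltr_pdivrMr // mul1r.
have half_gt0 : 0 < 1 / 2 :> R by lra.
have [N _ HN] := cvgr_lt _ (cvg_expr ratio_lt1) (1 / 2) half_gt0.
exists N => n nN; have small := HN n nN; rewrite /= in small.
have -> : a ^+ n = (a / b) ^+ n * b ^+ n by rewrite expr_div_n divfK // gt_eqF ?exprn_gt0.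
have bn_gt0 : 0 < b ^+ n by rewrite exprn_gt0.
nra.
Qed.

(* The growth rate rho of R_n is attained up to any eps > 0, with room for
   the factor 2 coming from the two terms of the theta-norm. *)
Lemma growth_rate (r : nat -> R) (rho eps : R) : 0 < eps ->
  (fun n : nat => powR (r n) (n%:R)^-1) @ \oo --> rho ->
  0 < rho + eps /\ exists N, forall n, (N <= n)%N -> 2 * r n <= (rho + eps) ^+ n.
Proof.
move=> eps_gt0 Hr.
have rho_a : rho < rho + eps / 2 by lra.
have [a_gt0 [N1 HN1]] := root_test_bound Hr rho_a.
have a_b : rho + eps / 2 < rho + eps by lra.
have [N2 HN2] := geometric_domination a_gt0 a_b.
split; first exact: lt_trans a_gt0 a_b.
exists (maxn N1 N2) => n; rewrite geq_max => /andP[nN1 nN2].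
by apply: le_trans (HN2 n nN2); rewrite ler_pM2l // HN1.
Qed.

End GrowthRate.

Lemma le_mul_ereal_inf (R : realType) (x : \bar R) (c : R) (T : set R) : 0 < c ->
  (forall L, T L -> (x <= (c * L)%:E)%E) ->
  (x <= c%:E * ereal_inf [set L%:E | L in T])%E.
Proof.
move=> c_gt0 H; rewrite -lee_pdivrMl //; apply: le_ereal_inf_tmp => _ [L TL <-].
by rewrite lee_pdivrMl // -EFinM; exact: H.
Qed.

Theorem mainTheorem7 (R : realType) (V : eqType) (nbrs : V -> seq V)
  (Huniq : forall v, uniq (nbrs v))
  (Hsym : forall u v, (u \in nbrs v) = (v \in nbrs u))
  (Hirr : forall v, v \notin nbrs v)
  (Hconn : forall u v, exists s, path (fun x y => y \in nbrs x) u s /\ last u s = v)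
  (Hdeg2 : forall v, (2 <= size (nbrs v))%N)
  (Hbdd : exists D : nat, forall v, (size (nbrs v) <= D)%N)
  (theta : R) (Htheta : 0 < theta < 1)
  (rho : R)
  (Hrho : (fun n : nat => powR (Rn R nbrs n) (n%:R)^-1) @ \oo --> rho)
  (pc : seq (V * V) -> seqE V)
  (Hpc : forall c, (0 < size c)%N -> postal nbrs c ->
           Paths nbrs (pc c) /\ code_prefix (size c) (pc c) = c) :
  forall eps : R, 0 < eps -> exists N : nat, forall n : nat, (N <= n)%N ->
    forall f : seqE V -> R, Lip nbrs theta f ->
      let g := fun p => iter n (transfer nbrs) f p
                        - iter n (transfer nbrs) (Pi pc n f) p in
      (normInf nbrs g <= ((rho + eps) ^+ n * theta ^+ n)%:E * L1 nbrs theta f)%E /\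
      (normTheta nbrs theta g <= ((rho + eps) ^+ n * theta ^+ n)%:E * L1 nbrs theta f)%E.
Proof.
move=> eps eps_gt0; have [D HD] := Hbdd.
have [rate_gt0 [N HN]] := growth_rate eps_gt0 Hrho.
have [theta_gt0 theta_lt1] := andP Htheta.
have theta01 : 0 <= theta <= 1 by rewrite !ltW.
exists (maxn 1 N) => n; rewrite geq_max => /andP[n_gt0 nN] f _ g.
have c_gt0 : 0 < (rho + eps) ^+ n * theta ^+ n by rewrite mulr_gt0 ?exprn_gt0.
have Rn_small : 2 * (Rn R nbrs n * theta ^+ n) <= (rho + eps) ^+ n * theta ^+ n.
  by rewrite mulrA; apply: ler_wpM2r; [rewrite exprn_ge0 ?ltW | exact: HN].
have Rn0 : 0 <= Rn R nbrs n * theta ^+ n by rewrite mulr_ge0 ?(Rn_ge0 HD) ?exprn_ge0 ?ltW.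
split; apply: le_mul_ereal_inf => // L [L0 HL].
  have [Hsup _] := approx_error_norms Hsym HD Hpc theta01 (conj L0 HL) n_gt0.
  apply: le_trans Hsup _; rewrite lee_fin; apply: ler_wpM2r => //; lra.
have [Hsup HLip] := approx_error_norms Hsym HD Hpc theta01 (conj L0 HL) n_gt0.
apply: le_trans (leeD HLip Hsup) _; rewrite -EFinD lee_fin; nra.
Qed.
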